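(* Let $(\mathcal{A},\mathbf{m})$ be a multiarrangement in $\mathbb{Q}^l$ with $\mathcal{A}=\{H_1,\dots,H_n\}$, $H_i=\alpha_i^{-1}(0)$, where the $\alpha_i\in\mathbb{Z}[x_1,\dots,x_l]$ are linear forms such that no prime number divides any $\alpha_i$. Then for every sufficiently large prime $p$: $(\mathcal{A}_p,\mathbf{m})$ is free in $\mathbb{F}_p^l$ with exponents $(e_1,\dots,e_l)$ if and only if $(\mathcal{A},\mathbf{m})$ is free in $\mathbb{Q}^l$ with exponents $(e_1,\dots,e_l)$.
   Context: For a field $\mathbb{K}$ and $R=\mathbb{K}[x_1,\dots,x_l]$, a multiarrangement with hyperplanes $\beta_i^{-1}(0)$ and multiplicities $\mathbf{m}_i\in\mathbb{Z}_{\ge0}$ has $D=\{\delta=\sum_j f_j\partial_{x_j}: f_j\in R,\ \delta(\beta_i)\in\beta_i^{\mathbf{m}_i}R\ \forall i\}$; it is free with exponents $(e_1,\dots,e_l)$ if $D$ is a free $R$-module with a basis of homogeneous derivations of polynomial degrees $e_1,\dots,e_l$. Let $\pi_p$ be reduction mod $p$ on $\mathbb{Z}[x_1,\dots,x_l]$. For $p$ large, $\pi_p(\alpha_i)\ne\pi_p(\alpha_j)$ for $i\ne j$, and $(\mathcal{A}_p,\mathbf{m})$ denotes the multiarrangement in $\mathbb{F}_p^l$ with hyperplanes $\pi_p(\alpha_i)^{-1}(0)$ of multiplicities $\mathbf{m}(H_i)$. *)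

From HB Require Import structures.
From mathcomp Require Import all_boot all_order all_algebra.
From mathcomp Require Import mpoly.
Set Implicit Arguments. Unset Strict Implicit. Unset Printing Implicit Defensive.
Import Order.TTheory GRing.Theory.
Local Open Scope ring_scope.

Definition linform (K : fieldType) (l : nat) (c : 'I_l -> K) : {mpoly K[l]} :=
  \sum_(j < l) c j *: 'X_j.

(* A polynomial derivation delta = sum_j f_j d/dx_j is given by its
   coefficient family f : 'I_l -> {mpoly K[l]}. *)
Definition derivation (K : fieldType) (l : nat) := 'I_l -> {mpoly K[l]}.

(* delta(beta) for a linear form beta with coefficients c:
   sum_j f_j * (d beta / d x_j) = sum_j c_j f_j. *)
Definition apply_lin (K : fieldType) (l : nat) (delta : derivation K l)
  (c : 'I_l -> K) : {mpoly K[l]} :=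
  \sum_(j < l) c j *: delta j.

Definition in_D (K : fieldType) (l n : nat) (beta : 'I_n -> 'I_l -> K)
  (m : 'I_n -> nat) (delta : derivation K l) : Prop :=
  forall i : 'I_n, exists q : {mpoly K[l]},
    apply_lin delta (beta i) = q * (linform (beta i)) ^+ (m i).

Definition homog_deriv (K : fieldType) (l : nat) (d : nat)
  (delta : derivation K l) : Prop :=
  forall j : 'I_l, delta j \is ishomog1 d (@mdeg l).

Definition free_multiarr (K : fieldType) (l n : nat)
  (beta : 'I_n -> 'I_l -> K) (m : 'I_n -> nat) (e : 'I_l -> nat) : Prop :=
  exists theta : 'I_l -> derivation K l,
    (forall k, in_D beta m (theta k)) /\
    (forall k, homog_deriv (e k) (theta k)) /\
    (forall delta : derivation K l, in_D beta m delta ->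
       exists g : 'I_l -> {mpoly K[l]},
         forall j, delta j = \sum_(k < l) g k * theta k j) /\
    (forall g : 'I_l -> {mpoly K[l]},
       (forall j, \sum_(k < l) g k * theta k j = 0) -> forall k, g k = 0).

Definition red_form (K : fieldType) (l : nat) (a : 'I_l -> int) : 'I_l -> K :=
  fun j => (a j)%:~R.

(* Saito's criterion: derivations theta_1, ..., theta_l in D(A, m) form a basis
   iff det [theta_k(x_j)] = c * Q with c a nonzero constant, Q = prod alpha_i^m_i
   being the defining polynomial; over any field this follows from Cramer's rule,
   the primality of linear forms, and a comparison with an explicit family of
   derivations of determinant Q * (product of the other forms).
   Membership in D of a homogeneous derivation of degree d is a linear system
   with integer coefficients in the coefficients of the derivation and of the
   quotients.  A basis over Q can be scaled to integer solutions; modulo any p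
   not dividing the numerator and denominator of c their reductions still
   satisfy Saito's criterion.  Conversely, once p exceeds nonzero maximal minors
   of the system and of an integer basis of its kernel, every solution mod p
   lifts to an integer solution; a basis over F_p thus lifts to integer
   derivations whose determinant is nonzero, divisible by Q and of degree
   deg Q, hence equal to c * Q over Q. *)

From HB Require Import structures.
From mathcomp Require Import all_boot all_order all_algebra.
From mathcomp Require Import mpoly.
From mathcomp Require Import zify ring.
From Stdlib Require Import Classical_Prop.
Set Implicit Arguments. Unset Strict Implicit. Unset Printing Implicit Defensive.
Import Order.TTheory GRing.Theory.
Local Open Scope ring_scope.

Section Divisibility.
Variable R : comPzRingType.
Implicit Types a b c x y : R.

Definition dvdr a b := exists q, b = q * a.

Lemma dvdrr a : dvdr a a. Proof. by exists 1; rewrite mul1r. Qed.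

Lemma dvdr0 a : dvdr a 0. Proof. by exists 0; rewrite mul0r. Qed.

Lemma dvdr_trans a b c : dvdr a b -> dvdr b c -> dvdr a c.
Proof. by move=> [q ->] [r ->]; exists (r * q); rewrite mulrA. Qed.

Lemma dvdr_mull a b c : dvdr a b -> dvdr a (c * b).
Proof. by move=> [q ->]; exists (c * q); rewrite mulrA. Qed.

Lemma dvdr_mulr a b c : dvdr a b -> dvdr a (b * c).
Proof. by rewrite mulrC; apply: dvdr_mull. Qed.

Lemma dvdrD a b c : dvdr a b -> dvdr a c -> dvdr a (b + c).
Proof. by move=> [q ->] [r ->]; exists (q + r); rewrite mulrDl. Qed.

Lemma dvdr_sum a (I : finType) (F : I -> R) :
  (forall i, dvdr a (F i)) -> dvdr a (\sum_i F i).
Proof. by move=> dvdF; apply: big_ind => //; [apply: dvdr0 | apply: dvdrD]. Qed.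

Lemma dvdr_subM a x1 y1 x2 y2 : dvdr a (x1 - y1) -> dvdr a (x2 - y2) ->
  dvdr a (x1 * x2 - y1 * y2).
Proof.
move=> d1 d2; have -> : x1 * x2 - y1 * y2 = x1 * (x2 - y2) + (x1 - y1) * y2 by ring.
by apply: dvdrD; [apply: dvdr_mull | apply: dvdr_mulr].
Qed.

Lemma dvdr_subX a x y k : dvdr a (x - y) -> dvdr a (x ^+ k - y ^+ k).
Proof.
move=> dxy; elim: k => [|k IHk]; first by rewrite !expr0 subrr; apply: dvdr0.
by rewrite !exprS; apply: dvdr_subM.
Qed.

End Divisibility.

Section LinearForms.
Variables (K : fieldType) (l : nat).
Local Notation P := {mpoly K[l]}.
Implicit Types (c : 'I_l -> K) (f g : P).

Lemma msize_dhomog f d : f != 0 -> f \is d.-homog -> msize f = d.+1.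
Proof. by move=> f_neq0 /dhomog_mf fd; rewrite -(mlead_deg f_neq0) fd ?mlead_supp. Qed.

Lemma msize_dhomog_le f d : f \is d.-homog -> (msize f <= d.+1)%N.
Proof.
by have [->|f_neq0 /(msize_dhomog f_neq0)->] := eqVneq f 0; rewrite ?msize0.
Qed.

Lemma msize_le_mulr f g : g != 0 -> (msize f <= msize (f * g))%N.
Proof.
move=> g_neq0; have [->|f_neq0] := eqVneq f 0; first by rewrite msize0.
have g_gt0 : (0 < msize g)%N by rewrite lt0n msize_poly_eq0.
by rewrite msizeM //; move: g_gt0; move: (msize f) (msize g) => u v; lia.
Qed.

Lemma mulr_eq_mpolyC f g (a : K) : a != 0 -> f * g = a%:MP ->
  exists2 b, b != 0 & f = b%:MP.
Proof.
move=> a_neq0 fg_a.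
have : f * g != 0 by rewrite fg_a mpolyC_eq0.
rewrite mulf_eq0 negb_or => /andP [f_neq0 g_neq0].
have f_gt0 : (0 < msize f)%N by rewrite lt0n msize_poly_eq0.
have g_gt0 : (0 < msize g)%N by rewrite lt0n msize_poly_eq0.
apply/msize_poly1P/eqP; move: (msizeM f_neq0 g_neq0); rewrite fg_a msizeC a_neq0 /=.
by move: f_gt0 g_gt0; move: (msize f) (msize g) => u v; lia.
Qed.

Lemma linform_coef c j : (linform c)@_U_(j) = c j.
Proof.
rewrite /linform raddf_sum (bigD1 j) //= big1 ?addr0 => [|k /negbTE kj].
  by rewrite mcoeffZ mcoeffXU eqxx mulr1.
by rewrite mcoeffZ mcoeffXU kj mulr0.
Qed.

Lemma linform_homog c : linform c \is 1.-homog.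
Proof. by apply: rpred_sum => k _; rewrite dhomogZ // dhomogX /= mdeg1. Qed.

Lemma linform_neq0 c j : c j != 0 -> linform c != 0.
Proof. by apply: contraNneq => c0; rewrite -linform_coef c0 mcoeff0. Qed.

Lemma msize_linform c j : c j != 0 -> msize (linform c) = 2.
Proof. by move=> cj; rewrite (msize_dhomog (linform_neq0 cj) (linform_homog c)). Qed.

Lemma linform_ndvd1 c j : c j != 0 -> ~ dvdr (linform c) 1.
Proof.
move=> cj [q /esym]; rewrite mulrC -mpolyC1 => /(mulr_eq_mpolyC (oner_neq0 K)) [a a0 La].
by move: (msize_linform cj); rewrite La msizeC a0.
Qed.

Lemma dvdr_linform c c' j j' : c j != 0 -> c' j' != 0 ->
  dvdr (linform c) (linform c') -> exists a, forall k, c' k = a * c k.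
Proof.
move=> cj cj' [q Lc'].
have q_neq0 : q != 0 by apply: contra_neq (linform_neq0 cj') => q0; rewrite Lc' q0 mul0r.
have /eqP : msize q = 1%N.
  move: (msizeM q_neq0 (linform_neq0 cj)); rewrite -Lc' (msize_linform cj) (msize_linform cj').
  by move: (msize q) => u; lia.
case/msize_poly1P => a _ qa; exists a => k.
by rewrite -linform_coef Lc' qa mul_mpolyC mcoeffZ linform_coef.
Qed.

Section Substitution.
Variables (c : 'I_l -> K) (j0 : 'I_l).
Hypothesis cj0 : c j0 != 0.
Local Notation L := (linform c).

(* Solving L = 0 for x_j0: a ring morphism with kernel exactly L * P. *)
Definition linform_elim : l.-tuple P :=
  [tuple 'X_k - (if k == j0 then (c j0)^-1 *: L else 0) | k < l].
Local Notation phi := (comp_mpoly linform_elim).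

Lemma linform_elimX k : phi 'X_k = 'X_k - (if k == j0 then (c j0)^-1 *: L else 0).
Proof. by rewrite comp_mpolyXU -tnth_nth tnth_mktuple. Qed.

Lemma linform_elimL : phi L = 0.
Proof.
rewrite raddf_sum /=; under eq_bigr => k _ do rewrite comp_mpolyZ linform_elimX scalerBr.
rewrite sumrB [X in _ - X](bigD1 j0) //= [X in _ - (_ + X)]big1 ?addr0; last first.
  by move=> k /negbTE ->; rewrite scaler0.
by rewrite eqxx scalerA mulfV // scale1r subrr.
Qed.

Lemma dvdr_sub_linform_elim f : dvdr L (f - phi f).
Proof.
elim/mpolyind: f => [|a mu f _ _ IHf]; first by rewrite raddf0 subr0; apply: dvdr0.
rewrite raddfD /= comp_mpolyZ opprD addrACA -scalerBr -mul_mpolyC.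
apply: dvdrD => //; apply: dvdr_mull; rewrite comp_mpolyX mpolyXE_id.
apply: (big_ind2 (fun x y => dvdr L (x - y))) => [|x1 x2 y1 y2|k _].
- by rewrite subrr; apply: dvdr0.
- exact: dvdr_subM.
apply: dvdr_subX; rewrite tnth_mktuple opprB addrC subrK.
by case: eqP => _; [rewrite -mul_mpolyC; apply/dvdr_mull/dvdrr | apply: dvdr0].
Qed.

Lemma dvdr_linformE f : dvdr L f <-> phi f = 0.
Proof.
split=> [[q ->]|phi_f0]; first by rewrite rmorphM /= linform_elimL mulr0.
by move: (dvdr_sub_linform_elim f); rewrite phi_f0 subr0.
Qed.

Lemma linform_prime f g : dvdr L (f * g) -> dvdr L f \/ dvdr L g.
Proof.
rewrite !dvdr_linformE rmorphM /= => /eqP; rewrite mulf_eq0.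
by case/orP=> /eqP; [left | right].
Qed.

End Substitution.
End LinearForms.

Section Derivations.
Variables (K : fieldType) (l : nat).
Local Notation P := {mpoly K[l]}.
Implicit Types (th : 'I_l -> derivation K l) (delta : derivation K l).

Definition deriv_mx th : 'M[P]_l := \matrix_(k, j) th k j.

Lemma deriv_mxE th k j : deriv_mx th k j = th k j.
Proof. by rewrite mxE. Qed.

Definition indep_derivs th :=
  forall g : 'I_l -> P, (forall j, \sum_(k < l) g k * th k j = 0) -> forall k, g k = 0.

Lemma indep_derivs_det th : \det (deriv_mx th) != 0 -> indep_derivs th.
Proof.
move=> det_neq0 g gth0 k; pose G : 'rV[P]_l := \row_k g k.
have GM0 : G *m deriv_mx th = 0.
  by apply/matrixP => i j; rewrite !mxE -[RHS](gth0 j); apply: eq_bigr => k' _; rewrite !mxE.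
move: (congr1 (fun X => (X *m \adj (deriv_mx th)) 0 k) GM0).
rewrite -mulmxA mul_mx_adj mul0mx mul_mx_scalar !mxE => /eqP.
by rewrite mulf_eq0 (negbTE det_neq0) => /eqP.
Qed.

Definition set_deriv th k delta : 'I_l -> derivation K l :=
  fun k' => if k' == k then delta else th k'.

Lemma det_set_deriv th k delta :
  \det (deriv_mx (set_deriv th k delta)) = \sum_j delta j * cofactor (deriv_mx th) k j.
Proof.
rewrite (expand_det_row _ k); apply: eq_bigr => j _.
rewrite deriv_mxE /set_deriv eqxx; congr (_ * (_ * \det _)); apply/matrixP => a b.
by rewrite !mxE /set_deriv eq_sym (negbTE (neq_lift k a)).
Qed.

Lemma Cramer_deriv th delta j :
  \sum_k \det (deriv_mx (set_deriv th k delta)) * th k j = delta j * \det (deriv_mx th).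
Proof.
under eq_bigr => k _ do rewrite det_set_deriv mulr_suml.
rewrite exchange_big /=.
under eq_bigr => j' _ do (under eq_bigr => k _ do rewrite -mulrA; rewrite -mulr_sumr).
transitivity (\sum_j' delta j' * (\adj (deriv_mx th) *m deriv_mx th) j' j).
  by apply: eq_bigr => j' _; rewrite mxE; congr (_ * _); apply: eq_bigr => k _; rewrite !mxE mulrC.
rewrite mul_adj_mx (bigD1 j) //= big1 ?addr0 => [|j' /negbTE j'j].
  by rewrite !mxE eqxx mulr1n.
by rewrite !mxE j'j mulr0n mulr0.
Qed.

Lemma det_deriv_mx_homog th (e : 'I_l -> nat) : (forall k, homog_deriv (e k) (th k)) ->
  \det (deriv_mx th) \is (\sum_k e k)%N.-homog.
Proof.
move=> th_homog; apply: rpred_sum => s _; rewrite rpredMsign.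
apply: (big_ind2 (fun p d => p \is d.-homog)) => [|p d q d'|k _]; rewrite ?dhomog1 ?deriv_mxE //.
  exact: dhomogM.
exact: th_homog.
Qed.

Lemma det_deriv_mx_scale th (c : 'I_l -> K) :
  \det (deriv_mx (fun k j => c k *: th k j)) = (\prod_k c k) *: \det (deriv_mx th).
Proof.
have -> : deriv_mx (fun k j => c k *: th k j) = diag_mx (\row_k (c k)%:MP) *m deriv_mx th.
  by apply/matrixP => k j; rewrite mul_diag_mx !mxE mul_mpolyC.
rewrite det_mulmx det_diag -mul_mpolyC rmorph_prod; congr (_ * _).
by apply: eq_bigr => k _; rewrite mxE.
Qed.

Definition elim_mx (c : 'I_l -> K) (j0 : 'I_l) : 'M[K]_l :=
  \matrix_(j, k) if j == j0 then (if k == j0 then 1 else - c k / c j0) else (j == k)%:R.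

Lemma det_elim_mx c j0 : \det (elim_mx c j0) = 1.
Proof.
rewrite (expand_det_col _ j0) (bigD1 j0) //= big1 ?addr0 => [|j /negbTE jj0]; last first.
  by rewrite mxE jj0 mul0r.
rewrite mxE !eqxx mul1r /cofactor addnn -signr_odd odd_double expr0 mul1r -[RHS](det1 _ l.-1).
congr (\det _); apply/matrixP => a b; rewrite !mxE eq_sym (negbTE (neq_lift j0 a)).
by rewrite (inj_eq lift_inj).
Qed.

Lemma elim_mx_orth c j0 k : c j0 != 0 -> k != j0 -> \sum_j c j * elim_mx c j0 j k = 0.
Proof.
move=> cj0 /negbTE kj0; rewrite (bigD1 j0) //= (bigD1 k) /= ?kj0 //.
rewrite big1 ?addr0 => [|j /andP [/negbTE jj0 /negbTE jk]]; last by rewrite mxE jj0 jk mulr0.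
by rewrite !mxE !eqxx kj0 /=; field.
Qed.

End Derivations.

Section Arrangement.
Variables (K : fieldType) (l n : nat) (beta : 'I_n -> 'I_l -> K) (m : 'I_n -> nat).
Hypothesis beta_neq0 : forall i, exists j, beta i j != 0.
Hypothesis beta_distinct : forall i i', i != i' -> ~ exists c, forall j, beta i j = c * beta i' j.
Local Notation P := {mpoly K[l]}.
Local Notation L i := (linform (beta i)).
Implicit Types (th : 'I_l -> derivation K l) (delta : derivation K l).

Lemma form_prime i f g : dvdr (L i) (f * g) -> dvdr (L i) f \/ dvdr (L i) g.
Proof. by have [j /linform_prime] := beta_neq0 i; apply. Qed.

Lemma form_neq0 i : L i != 0.
Proof. by have [j /linform_neq0] := beta_neq0 i. Qed.

Lemma form_ndvd1 i : ~ dvdr (L i) 1.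
Proof. by have [j /linform_ndvd1] := beta_neq0 i. Qed.

Lemma dvdr_form_eq t i : dvdr (L t) (L i) -> t = i.
Proof.
move=> dvd_ti; have [//|ti] := eqVneq t i; rewrite eq_sym in ti; exfalso.
have [[j bj] [j' bj']] := (beta_neq0 t, beta_neq0 i).
exact: beta_distinct ti (dvdr_linform bj bj' dvd_ti).
Qed.

Lemma dvdr_formX_eq t i e : dvdr (L t) (L i ^+ e) -> t = i.
Proof.
elim: e => [|e IHe]; first by rewrite expr0 => /form_ndvd1.
by rewrite exprS => /form_prime [/dvdr_form_eq|/IHe].
Qed.

Lemma dvdr_form_prod t (s : seq 'I_n) (k : 'I_n -> nat) :
  dvdr (L t) (\prod_(i <- s) L i ^+ k i) -> t \in s.
Proof.
elim: s => [|i s IHs]; first by rewrite big_nil => /form_ndvd1.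
by rewrite big_cons inE => /form_prime [/dvdr_formX_eq ->|/IHs ->]; rewrite ?eqxx ?orbT.
Qed.

Lemma Gauss_dvdr_formX t f g e : ~ dvdr (L t) f ->
  dvdr (L t ^+ e) (f * g) -> dvdr (L t ^+ e) g.
Proof.
move=> ndvd_f; elim: e g => [|e IHe] g; first by exists g; rewrite mulr1.
rewrite exprSr => dvd_fg.
have [/ndvd_f[]|[g' gE]] := form_prime (dvdr_trans (dvdr_mull _ (dvdrr _)) dvd_fg).
move: dvd_fg; rewrite gE mulrA => -[q]; rewrite mulrA => /(mulIf (form_neq0 t)) fg'.
by have [q' ->] := IHe g' (ex_intro _ q fg'); exists q'; rewrite mulrA.
Qed.

Lemma dvdr_prod_formX (s : seq 'I_n) f : uniq s ->
  (forall i, i \in s -> dvdr (L i ^+ m i) f) -> dvdr (\prod_(i <- s) L i ^+ m i) f.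
Proof.
elim: s f => [|i s IHs] f; first by exists f; rewrite big_nil mulr1.
rewrite cons_uniq => /andP [i_notin_s s_uniq] dvd_f.
have [g fE] := IHs f s_uniq (fun j js => dvd_f j (mem_behead (s := i :: s) js)).
have i_ndvd : ~ dvdr (L i) (\prod_(j <- s) L j ^+ m j).
  by move/dvdr_form_prod => i_in_s; rewrite i_in_s in i_notin_s.
have := dvd_f i (mem_head _ _); rewrite fE mulrC => /(Gauss_dvdr_formX i_ndvd) [q gE].
by exists q; rewrite gE big_cons mulrC -mulrA.
Qed.

Definition def_poly : P := \prod_(i < n) L i ^+ m i.

Definition def_poly_but i : P := \prod_(j < n | j != i) L j ^+ m j.

Local Notation Q := def_poly.

Lemma def_poly_neq0 : Q != 0.
Proof. by apply/prodf_neq0 => i _; rewrite expf_neq0 ?form_neq0. Qed.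

Lemma def_polyE i : Q = L i ^+ m i * def_poly_but i.
Proof. by rewrite /def_poly (bigD1 i). Qed.

Lemma dvdr_formX_def_poly_but i t : t != i -> dvdr (L t ^+ m t) (def_poly_but i).
Proof. by move=> ti; rewrite /def_poly_but (bigD1 t) //=; apply/dvdr_mulr/dvdrr. Qed.

Lemma def_poly_homog : Q \is (\sum_i m i)%N.-homog.
Proof.
apply: (big_ind2 (fun p d => p \is d.-homog)) => [|p d q e|i _]; first exact: dhomog1.
  exact: dhomogM.
by move: (dhomogMn (m i) (linform_homog (beta i))); rewrite mul1n.
Qed.

Lemma dvdr_def_poly f : (forall i, dvdr (L i ^+ m i) f) -> dvdr Q f.
Proof. by move=> dvd_f; apply: dvdr_prod_formX => [|i _]; rewrite ?index_enum_uniq. Qed.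

(* Evaluate the derivations at the coefficient vector w of L i: each entry of
   deriv_mx th *m w is divisible by L i ^+ m i, hence so is det * w j0. *)
Lemma dvdr_formX_det th i : (forall k, in_D beta m (th k)) ->
  dvdr (L i ^+ m i) (\det (deriv_mx th)).
Proof.
move=> thD; have [j0 bij0] := beta_neq0 i.
have [q qE] := fin_all_exists (fun k => thD k i).
pose w : 'cV[P]_l := \col_j (beta i j)%:MP.
have Mw k : (deriv_mx th *m w) k 0 = q k * L i ^+ m i.
  by rewrite -qE mxE; apply: eq_bigr => j _; rewrite !mxE mulrC mul_mpolyC.
have : dvdr (L i ^+ m i) (\det (deriv_mx th) * (beta i j0)%:MP).
  have := congr1 (fun X => (X *m w) j0 0) (mul_adj_mx (deriv_mx th)).
  rewrite /= -mulmxA mul_scalar_mx !mxE => <-.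
  by apply: dvdr_sum => k; rewrite Mw mulrA; apply/dvdr_mull/dvdrr.
move=> [r rE]; exists ((beta i j0)^-1 *: r).
by rewrite -scalerAl -rE -mul_mpolyC mulrCA -mpolyCM mulVf // mulr1.
Qed.

Lemma dvdr_def_poly_det th : (forall k, in_D beta m (th k)) ->
  dvdr Q (\det (deriv_mx th)).
Proof. by move=> thD; apply: dvdr_def_poly => i; apply: dvdr_formX_det. Qed.

Definition spans_D th :=
  forall delta, in_D beta m delta ->
    exists g : 'I_l -> P, forall j, delta j = \sum_(k < l) g k * th k j.

Lemma saito_criterion th (c : K) : (forall k, in_D beta m (th k)) -> c != 0 ->
  \det (deriv_mx th) = c *: Q -> spans_D th /\ indep_derivs th.
Proof.
move=> thD c_neq0 detE.
split; last by apply: indep_derivs_det; rewrite detE scaler_eq0 negb_or c_neq0 def_poly_neq0.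
move=> delta deltaD.
have dvd_k k : dvdr Q (\det (deriv_mx (set_deriv th k delta))).
  by apply: dvdr_def_poly_det => k'; rewrite /set_deriv; case: eqP.
have [h hE] := fin_all_exists dvd_k.
have cramer j : \sum_k h k * Q * th k j = delta j * (c *: Q).
  by rewrite -detE -Cramer_deriv; apply: eq_bigr => k _; rewrite hE.
exists (fun k => c^-1 *: h k) => j; apply: (mulfI def_poly_neq0); symmetry.
transitivity (c^-1 *: \sum_k h k * Q * th k j).
  rewrite mulr_sumr scaler_sumr; apply: eq_bigr => k _.
  by rewrite -scalerAl -scalerAr mulrCA mulrA.
by rewrite cramer -scalerAr scalerA mulVf // scale1r mulrC.
Qed.

Definition form_prod_avoiding i (f : P) :=
  exists2 s : seq 'I_n, i \notin s & f = \prod_(j <- s) L j.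

Lemma form_prod_avoidingM i f g : form_prod_avoiding i f -> form_prod_avoiding i g ->
  form_prod_avoiding i (f * g).
Proof.
by move=> [s i_s ->] [t i_t ->]; exists (s ++ t); rewrite ?big_cat // mem_cat negb_or i_s.
Qed.

Lemma form_prod_avoiding_prod i (I : finType) (p : pred I) (F : I -> P) :
  (forall x, p x -> form_prod_avoiding i (F x)) -> form_prod_avoiding i (\prod_(x | p x) F x).
Proof.
move=> avoidF; apply: big_ind => //; last exact: form_prod_avoidingM.
by exists [::]; rewrite ?big_nil.
Qed.

Lemma def_poly_but_avoiding i : form_prod_avoiding i (def_poly_but i).
Proof.
apply: form_prod_avoiding_prod => j ji; rewrite -[m j]card_ord -prodr_const.
by apply: form_prod_avoiding_prod => _ _; exists [:: j]; rewrite ?big_seq1 ?inE // eq_sym.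
Qed.

Lemma dvdr_form_prod_cases h (s : seq 'I_n) : dvdr h (\prod_(j <- s) L j) ->
  (exists2 a, a != 0 & h = a%:MP) \/ exists2 j, j \in s & dvdr (L j) h.
Proof.
elim: s => [|i s IHs] [g].
  by rewrite big_nil mulrC -mpolyC1 => /esym/(mulr_eq_mpolyC (oner_neq0 K)); left.
rewrite big_cons => prodE.
have : dvdr (L i) (g * h) by rewrite -prodE; apply/dvdr_mulr/dvdrr.
case/form_prime => [[g' gE]|Li_h]; last by right; exists i; rewrite ?mem_head.
have {}prodE : \prod_(j <- s) L j * L i = g' * h * L i by rewrite mulrC prodE gE mulrAC.
have [|[j js Lj_h]] := IHs (ex_intro _ _ (mulIf (form_neq0 i) prodE)); first by left.
by right; exists j; rewrite // inE js orbT.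
Qed.

Definition elim_family i j0 : 'I_l -> derivation K l :=
  fun k j => (if k == j0 then Q else def_poly_but i) * (elim_mx (beta i) j0 j k)%:MP.

Lemma apply_lin_elim_family i j0 k (c : 'I_l -> K) :
  apply_lin (elim_family i j0 k) c =
  (if k == j0 then Q else def_poly_but i) * (\sum_j c j * elim_mx (beta i) j0 j k)%:MP.
Proof.
rewrite raddf_sum mulr_sumr; apply: eq_bigr => j _.
by rewrite scalerAr -mul_mpolyC -mpolyCM.
Qed.

Lemma elim_family_in_D i j0 k : beta i j0 != 0 -> in_D beta m (elim_family i j0 k).
Proof.
move=> bij0 t; rewrite apply_lin_elim_family.
have [kj0|kj0] := eqVneq k j0.
  by rewrite (def_polyE t) -mulrA mulrC; eexists.
have [->|ti] := eqVneq t i; first by exists 0; rewrite elim_mx_orth // mulr0 mul0r.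
by have [q ->] := dvdr_formX_def_poly_but ti; eexists; rewrite mulrAC.
Qed.

Lemma det_elim_family i j0 :
  \det (deriv_mx (elim_family i j0)) = Q * \prod_(k | k != j0) def_poly_but i.
Proof.
have -> : deriv_mx (elim_family i j0) = diag_mx (\row_k (if k == j0 then Q else def_poly_but i))
    *m (map_mx (@mpolyC l K) (elim_mx (beta i) j0))^T.
  by apply/matrixP => k j; rewrite mul_diag_mx !mxE /elim_family mxE.
rewrite det_mulmx det_tr det_map_mx det_elim_mx rmorph1 mulr1 det_diag (bigD1 j0) //=.
by rewrite mxE eqxx; congr (_ * _); apply: eq_bigr => k /negbTE kj0; rewrite mxE kj0.
Qed.

Lemma spans_D_mx th dl : spans_D th -> (forall k, in_D beta m (dl k)) ->
  exists G : 'M[P]_l, deriv_mx dl = G *m deriv_mx th.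
Proof.
move=> th_spans dlD; have [g gE] := fin_all_exists (fun k => th_spans _ (dlD k)).
exists (\matrix_(k, k') g k k'); apply/matrixP => k j.
by rewrite deriv_mxE gE mxE; apply: eq_bigr => k' _; rewrite !mxE.
Qed.

(* Comparing with the family elim_family i, whose determinant is Q times a
   product of forms other than L i, shows that L i does not divide det / Q. *)
Lemma det_spanning_avoiding th h i : spans_D th -> \det (deriv_mx th) = h * Q ->
  exists2 s, i \notin s & dvdr h (\prod_(j <- s) L j).
Proof.
move=> th_spans detE; have [j0 bij0] := beta_neq0 i.
have [G GE] := spans_D_mx th_spans (fun k => elim_family_in_D k bij0).
have [s i_s prodE] := form_prod_avoiding_prod (fun k (_ : k != j0) => def_poly_but_avoiding i).
exists s => //; exists (\det G); apply: (mulIf def_poly_neq0).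
by rewrite -prodE mulrC -det_elim_family GE det_mulmx detE mulrA.
Qed.

Lemma det_spanning_const th h : spans_D th -> \det (deriv_mx th) = h * Q ->
  exists2 a, a != 0 & h = a%:MP.
Proof.
move=> th_spans detE; case: (posnP n) => [n0|n_gt0].
  have Q1 : Q = 1 by rewrite /def_poly big1 // => i; have := ltn_ord i; lia.
  have unitD k : in_D beta m (fun j => (k == j)%:R) by move=> i; have := ltn_ord i; lia.
  have [G] := spans_D_mx th_spans unitD.
  have -> : deriv_mx (fun k j => (k == j)%:R) = 1%:M :> 'M[P]_l.
    by apply/matrixP => k j; rewrite !mxE.
  move/(congr1 determinant); rewrite det1 det_mulmx detE Q1 mulr1 mulrC -mpolyC1 => /esym.
  exact: mulr_eq_mpolyC (oner_neq0 K).
have [s _ /dvdr_form_prod_cases [//|[i _ Li_h]]] :=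
  det_spanning_avoiding (Ordinal n_gt0) th_spans detE.
have [s' i_s' h_s'] := det_spanning_avoiding i th_spans detE.
have : dvdr (L i) (\prod_(j <- s') L j ^+ 1).
  by under eq_bigr do rewrite expr1; exact: dvdr_trans h_s'.
by move/dvdr_form_prod; rewrite (negbTE i_s').
Qed.

Lemma det_spanning th : (forall k, in_D beta m (th k)) -> spans_D th ->
  exists2 c, c != 0 & \det (deriv_mx th) = c *: Q.
Proof.
move=> thD th_spans; have [h detE] := dvdr_def_poly_det thD.
by have [a a_neq0 hE] := det_spanning_const th_spans detE; exists a; rewrite // detE hE mul_mpolyC.
Qed.

Lemma dhomog_def_poly_multiple f : f != 0 -> f \is (\sum_i m i)%N.-homog -> dvdr Q f ->
  exists2 c, c != 0 & f = c *: Q.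
Proof.
move=> f_neq0 f_homog [h fE].
have h_neq0 : h != 0 by apply: contra_neq f_neq0 => h0; rewrite fE h0 mul0r.
have h_gt0 : (0 < msize h)%N by rewrite lt0n msize_poly_eq0.
have /eqP : msize h = 1%N.
  move: (msizeM h_neq0 def_poly_neq0).
  rewrite -fE (msize_dhomog f_neq0 f_homog) (msize_dhomog def_poly_neq0 def_poly_homog).
  by move: h_gt0; move: (msize h) => u; lia.
by case/msize_poly1P => c c_neq0 hE; exists c; rewrite // fE hE mul_mpolyC.
Qed.

Lemma def_poly_multiple_deg f (c : K) d : c != 0 -> f = c *: Q -> f \is d.-homog ->
  d = (\sum_i m i)%N.
Proof.
move=> c_neq0 fE f_homog.
have f_neq0 : f != 0 by rewrite fE scaler_eq0 negb_or c_neq0 def_poly_neq0.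
by apply: dhomog_uniq f_neq0 f_homog _; rewrite fE dhomogZ ?def_poly_homog.
Qed.

End Arrangement.

Lemma intr_Fp_eq0 p (z : int) : prime p -> ((z%:~R : 'F_p) == 0) = (p%:Z %| z)%Z.
Proof. by move=> p_pr; rewrite (dvdz_pcharf (pchar_Fp p_pr)). Qed.

Lemma intr_Fp_neq0 p (z : int) : prime p -> z != 0 -> (`|z| < p)%N -> (z%:~R : 'F_p) != 0.
Proof.
move=> p_pr z_neq0 z_lt_p; rewrite intr_Fp_eq0 // dvdzE.
by apply: contraL z_lt_p => /dvdn_leq; rewrite absz_gt0 z_neq0 -leqNgt => ->.
Qed.

Lemma natr_Fp p (x : 'F_p) : prime p -> ((x : nat)%:R : 'F_p) = x.
Proof.
move=> p_pr; apply: val_inj; rewrite /= val_Fp_nat // modn_small //.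
by move: (ltn_ord x); move: (nat_of_ord x) => k; rewrite Fp_cast.
Qed.

Lemma common_denominator (T : finType) (v : T -> rat) :
  exists2 d : int, d != 0 & exists w : T -> int, forall t, (w t)%:~R = d%:~R * v t.
Proof.
exists (\prod_t denq (v t)); first by apply/prodf_neq0 => t _; apply: denq_neq0.
exists (fun t => numq (v t) * \prod_(t' | t' != t) denq (v t')) => t.
by rewrite [in RHS](bigD1 t) //= !intrM numqE; ring.
Qed.

Lemma mxrank_mxsub (F : fieldType) (m n k : nat) (f : 'I_k -> 'I_m) (g : 'I_k -> 'I_n)
  (A : 'M[F]_(m, n)) : (\rank (mxsub f g A) <= \rank A)%N.
Proof.
rewrite -[A]mul1mx mxsub_mul; apply: leq_trans (mxrankM_maxr _ _) _.
by rewrite mul1mx -mxrank_tr trmx_mxsub -(mxrank_tr A) mxrankS ?rowsub_sub.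
Qed.

Lemma map_intr_mx_inj (m n : nat) : injective (map_mx (intr : int -> rat) : 'M_(m, n) -> _).
Proof.
by move=> X Y /matrixP XY; apply/matrixP => i j; move: (XY i j); rewrite !mxE => /intr_inj.
Qed.

(* A nonsingular maximal minor of A over Q stays nonsingular mod large p. *)
Lemma mxrank_rat_le_Fp (N M : nat) (A : 'M[int]_(N, M)) :
  exists P0 : nat, forall p, prime p -> (P0 < p)%N ->
  (\rank (map_mx (intr : int -> rat) A) <= \rank (map_mx (intr : int -> 'F_p) A))%N.
Proof.
set AQ := map_mx intr A.
pose f := maxrankfun AQ.
have rf : row_full (rowsub f AQ)^T by rewrite /row_full mxrank_tr; apply: maxrowsub_free.
pose g := fullrankfun rf.
exists `|\det (mxsub f g A)|%N => p p_pr det_lt_p.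
have detQ_neq0 : \det (mxsub f g A) != 0.
  have : rowsub g (rowsub f AQ)^T \in unitmx.
    by rewrite -row_free_unit /row_free mxrank_fullrowsub.
  have -> : rowsub g (rowsub f AQ)^T = (map_mx intr (mxsub f g A))^T.
    by apply/matrixP => a b; rewrite !mxE.
  by rewrite unitmxE det_tr det_map_mx unitfE intr_eq0.
have minor_unit : mxsub f g (map_mx (intr : int -> 'F_p) A) \in unitmx.
  rewrite (_ : mxsub _ _ _ = map_mx intr (mxsub f g A)); last by apply/matrixP => a b; rewrite !mxE.
  by rewrite unitmxE det_map_mx unitfE intr_Fp_neq0.
by rewrite -{1}(mxrank_unit minor_unit) mxrank_mxsub.
Qed.

Section IntegerKernel.
Variables (N M : nat) (A : 'M[int]_(N, M)).
Local Notation AQ := (map_mx (intr : int -> rat) A).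

Lemma int_kermx : exists W : 'M[int]_N,
  W *m A = 0 /\ \rank (map_mx (intr : int -> rat) W) = (N - \rank AQ)%N.
Proof.
have [d d_neq0 [w wE]] := common_denominator (fun ij : 'I_N * 'I_N => kermx AQ ij.1 ij.2).
pose W : 'M[int]_N := \matrix_(i, j) w (i, j).
have WQ : map_mx intr W = d%:~R *: kermx AQ.
  by apply/matrixP => i j; rewrite [LHS]mxE [W i j]mxE wE [RHS]mxE.
exists W; split; last by rewrite WQ eqmx_scale ?mxrank_ker ?intr_eq0.
by apply: map_intr_mx_inj; rewrite map_mxM WQ -scalemxAl mulmx_ker scaler0 !map_mx0.
Qed.

(* For p beyond both minors, an integer kernel basis W reduces to a spanning
   set of the kernel of A mod p, by comparing ranks. *)
Lemma kermx_lift_Fp : exists P0 : nat, forall p, prime p -> (P0 < p)%N ->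
  forall v : 'rV['F_p]_N, v *m map_mx intr A = 0 ->
  exists w : 'rV[int]_N, w *m A = 0 /\ map_mx intr w = v.
Proof.
have [W [WA0 rankW]] := int_kermx.
have [[PA PA_ok] [PW PW_ok]] := (mxrank_rat_le_Fp A, mxrank_rat_le_Fp W).
exists (maxn PA PW) => p p_pr; rewrite gtn_max => /andP [PA_lt PW_lt] v vA0.
set Ap := map_mx (intr : int -> 'F_p) A; set Wp := map_mx (intr : int -> 'F_p) W.
have WpA0 : Wp *m Ap = 0 by rewrite -map_mxM WA0 map_mx0.
have Wp_ker : (Wp <= kermx Ap)%MS by rewrite sub_kermx WpA0.
have Wp_eq : (Wp == kermx Ap)%MS.
  rewrite -(geq_leqif (mxrank_leqif_eq Wp_ker)) mxrank_ker.
  move: (PA_ok p p_pr PA_lt) (PW_ok p p_pr PW_lt); rewrite rankW.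
  by move: (\rank AQ) (\rank Ap) (\rank Wp) => a b c; lia.
have /submxP [u ->] : (v <= Wp)%MS by rewrite (eqmxP Wp_eq) sub_kermx vA0.
exists (\row_j (u 0 j : nat)%:Z *m W); split; first by rewrite -mulmxA WA0 mulmx0.
rewrite map_mxM; congr (_ *m _); apply/matrixP => i j.
by rewrite !mxE ord1; apply: natr_Fp.
Qed.

End IntegerKernel.

(* Membership of a derivation, homogeneous of degree d, in D is a linear
   system with integer coefficients: the unknowns are the coefficients of the
   derivation and of the quotients q_i in delta(alpha_i) = q_i * alpha_i^m_i,
   which have degree at most d. *)
Section Encoding.
Variables (l n : nat) (alpha : 'I_n -> 'I_l -> int) (m : 'I_n -> nat) (d : nat).

Local Notation mon := 'X_{1..l < d.+1}.
Definition mdeg_eq : {pred mon} := fun mu => mdeg mu == d.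
Local Notation hmon := {mu : mon | mu \in mdeg_eq}.

Definition unknown := (('I_l * hmon) + ('I_n * mon))%type.
Definition equation := ('I_n * 'X_{1..l < (d + \sum_i m i).+3})%type.

Section AnyRing.
Variable R : comNzRingType.
Implicit Types v : unknown -> R.

Definition sol_deriv v (j : 'I_l) : {mpoly R[l]} :=
  \sum_(mu : hmon) v (inl (j, mu)) *: 'X_[val (val mu)].

Definition sol_quot v (i : 'I_n) : {mpoly R[l]} :=
  \sum_(nu : mon) v (inr (i, nu)) *: 'X_[val nu].

Definition int_form (i : 'I_n) : {mpoly R[l]} := \sum_j (alpha i j)%:~R *: 'X_j.

Definition residual v i : {mpoly R[l]} :=
  \sum_j (alpha i j)%:~R *: sol_deriv v j - sol_quot v i * int_form i ^+ m i.

Definition is_sol v := forall i, residual v i = 0.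

Definition basis_sol (t : unknown) : unknown -> R := fun s => (s == t)%:R.

Lemma eq_residual v1 v2 : v1 =1 v2 -> residual v1 =1 residual v2.
Proof.
move=> v12 i; congr (_ - _ * _); last by apply: eq_bigr => nu _; rewrite v12.
by apply: eq_bigr => j _; congr (_ *: _); apply: eq_bigr => mu _; rewrite v12.
Qed.

Lemma sum_basis_sol v s : \sum_t v t * basis_sol t s = v s.
Proof.
rewrite (bigD1 s) //= big1 ?addr0 => [|t /negbTE ts]; first by rewrite /basis_sol eqxx mulr1.
by rewrite /basis_sol eq_sym ts mulr0.
Qed.

Lemma sum_sol_lin (I : finType) (g : I -> unknown) (F : I -> {mpoly R[l]}) v :
  \sum_x v (g x) *: F x = \sum_t v t *: \sum_x basis_sol t (g x) *: F x.
Proof.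
under [RHS]eq_bigr => t _ do rewrite scaler_sumr; rewrite exchange_big /=.
apply: eq_bigr => x _; under eq_bigr => t _ do rewrite scalerA.
by rewrite -scaler_suml sum_basis_sol.
Qed.

Lemma residual_lin v i : residual v i = \sum_t v t *: residual (basis_sol t) i.
Proof.
under [RHS]eq_bigr => t _ do rewrite scalerBr scaler_sumr scalerAl.
rewrite sumrB -mulr_suml /residual /sol_quot sum_sol_lin; congr (_ - _ * _).
rewrite exchange_big /=; apply: eq_bigr => j _; rewrite /sol_deriv sum_sol_lin scaler_sumr.
by apply: eq_bigr => t _; rewrite !scalerA mulrC.
Qed.

Lemma residual_scale (c : R) v i : residual (fun t => c * v t) i = c *: residual v i.
Proof.
rewrite residual_lin [in RHS]residual_lin scaler_sumr.
by apply: eq_bigr => t _; rewrite scalerA.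
Qed.

Lemma sol_deriv_scale (c : R) v j : sol_deriv (fun t => c * v t) j = c *: sol_deriv v j.
Proof. by rewrite scaler_sumr; apply: eq_bigr => mu _; rewrite scalerA. Qed.

End AnyRing.

Section IntegerImage.
Variable R : comNzRingType.

Lemma sol_deriv_map (w : unknown -> int) j :
  map_mpoly intr (sol_deriv w j) = sol_deriv (fun t => (w t)%:~R : R) j.
Proof. by rewrite rmorph_sum; apply: eq_bigr => mu _; rewrite /= map_mpolyZ map_mpolyX. Qed.

Lemma int_form_map i : map_mpoly intr (int_form int i) = int_form R i.
Proof. by rewrite rmorph_sum; apply: eq_bigr => j _; rewrite /= map_mpolyZ map_mpolyX intz. Qed.

Lemma residual_map (w : unknown -> int) i :
  map_mpoly intr (residual w i) = residual (fun t => (w t)%:~R : R) i.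
Proof.
rewrite rmorphB rmorphM rmorphXn /= int_form_map rmorph_sum; congr (_ - _ * _).
  by apply: eq_bigr => j _; rewrite /= map_mpolyZ intz sol_deriv_map.
by rewrite rmorph_sum; apply: eq_bigr => nu _; rewrite /= map_mpolyZ map_mpolyX.
Qed.

Lemma mcoeff_residual (v : unknown -> R) i mu :
  (residual v i)@_mu = \sum_t v t * ((residual (basis_sol int t) i)@_mu)%:~R.
Proof.
rewrite residual_lin raddf_sum; apply: eq_bigr => t _; rewrite /= mcoeffZ -mcoeff_map_mpoly.
by rewrite residual_map (eq_residual (v2 := basis_sol R t)) // => s; rewrite rmorph_nat.
Qed.

End IntegerImage.

Definition sol_mx : 'M[int]_(#|{: unknown}|, #|{: equation}|) :=
  \matrix_(a, b) (residual (basis_sol int (enum_val a)) (enum_val b).1)@_(val (enum_val b).2).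

Section Field.
Variable K : fieldType.
Local Notation P := {mpoly K[l]}.
Implicit Types v : unknown -> K.

Lemma msize_residual v i : (msize (residual v i) <= (d + \sum_i m i).+3)%N.
Proof.
have msize_mon (mu : mon) : (msize ('X_[val mu] : P) <= d.+1)%N by rewrite msizeX bmdeg.
have m_le : (m i <= \sum_i m i)%N by rewrite (bigD1 i) //= leq_addr.
have quot_le : (msize (sol_quot v i) <= d.+1)%N.
  apply: leq_trans (msize_sum _ _ _) _; apply/bigmax_leqP => nu _.
  by rewrite (leq_trans (msizeZ_le _ _)).
have form_le : (msize (int_form K i ^+ m i) <= (m i).+1)%N.
  by apply: msize_dhomog_le; rewrite -[X in X.-homog]mul1n dhomogMn // linform_homog.
apply: leq_trans (msizeD_le _ _) _; rewrite msizeN geq_max; apply/andP; split.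
  apply: leq_trans (msize_sum _ _ _) _; apply/bigmax_leqP => j _.
  apply: leq_trans (msizeZ_le _ _) _; apply: leq_trans (msize_sum _ _ _) _.
  apply/bigmax_leqP => mu _; apply: leq_trans (msizeZ_le _ _) _.
  by apply: leq_trans (msize_mon _) _; lia.
apply: leq_trans (msizeM_le _ _) _.
by move: quot_le form_le m_le; move: (msize _) (msize _) => u u'; lia.
Qed.

Lemma is_solE v : is_sol v <-> (\row_a v (enum_val a)) *m map_mx intr sol_mx = 0.
Proof.
have entryE b : ((\row_a v (enum_val a)) *m map_mx intr sol_mx) 0 b =
    (residual v (enum_val b).1)@_(val (enum_val b).2).
  rewrite mcoeff_residual mxE [RHS](reindex (fun a : 'I_#|{: unknown}| => enum_val a)) /=.
    by apply: eq_bigr => a _; rewrite !mxE.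
  exact/onW_bij/enum_val_bij.
split=> [v_sol|sol_v0 i]; first by apply/matrixP => r b; rewrite ord1 entryE v_sol mcoeff0 mxE.
rewrite (mpolywE (msize_residual v i)); apply: big1 => mu _.
move: (congr1 (fun X : 'rV[K]_#|{: equation}| => X 0 (enum_rank ((i, mu) : equation))) sol_v0).
by rewrite entryE enum_rankK mxE /= => ->; rewrite scale0r.
Qed.

Lemma sol_deriv_homog v j : sol_deriv v j \is d.-homog.
Proof. by apply: rpred_sum => mu _; apply: dhomogZ; rewrite dhomogX; have := valP mu. Qed.

Lemma sol_in_D v : is_sol v -> in_D (fun i => red_form K (alpha i)) m (sol_deriv v).
Proof. by move=> v_sol i; exists (sol_quot v i); apply/eqP; rewrite -subr_eq0; apply/eqP/v_sol. Qed.

Lemma in_D_sol (delta : derivation K l) :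
  (forall i, exists j, red_form K (alpha i) j != 0) -> homog_deriv d delta ->
  in_D (fun i => red_form K (alpha i)) m delta ->
  exists v, is_sol v /\ forall j, sol_deriv v j = delta j.
Proof.
move=> alpha_neq0 delta_homog deltaD; have [q qE] := fin_all_exists deltaD.
have msize_q i : (msize (q i) <= d.+1)%N.
  have [j /linform_neq0 /(expf_neq0 (m i)) /(msize_le_mulr (q i))] := alpha_neq0 i.
  move/leq_trans; apply; rewrite -qE; apply: msize_dhomog_le.
  by rewrite /apply_lin; apply: rpred_sum => k _; apply/dhomogZ/delta_homog.
pose v (t : unknown) : K := match t with
  | inl (j, mu) => (delta j)@_(val (val mu))
  | inr (i, nu) => (q i)@_(val nu) end.
have derivE j : sol_deriv v j = delta j.
  rewrite [RHS](mpolywE (msize_dhomog_le (delta_homog j))).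
  rewrite (bigID (mem mdeg_eq)) [X in _ = X]/= [X in _ + X]big1 ?addr0.
    by rewrite big_sub; apply: eq_bigr.
  by move=> mu mu_ne_d; rewrite (dhomog_nemf_coeff (delta_homog j) mu_ne_d) scale0r.
have quotE i : sol_quot v i = q i by rewrite [RHS](mpolywE (msize_q i)).
exists v; split=> // i; rewrite /residual; under eq_bigr => j _ do rewrite derivE.
by rewrite quotE -qE subrr.
Qed.

End Field.

Lemma sol_intr (K : fieldType) (w : unknown -> int) :
  is_sol w -> is_sol (fun t => (w t)%:~R : K).
Proof. by move=> w_sol i; rewrite -residual_map w_sol raddf0. Qed.

Lemma map_intr_mpoly_inj (p : {mpoly int[l]}) : map_mpoly (intr : int -> rat) p = 0 -> p = 0.
Proof.
move=> p0; apply/mpolyP => mu; move: (congr1 (mcoeff mu) p0).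
by rewrite mcoeff_map_mpoly !mcoeff0 => /eqP; rewrite intr_eq0 => /eqP.
Qed.

Lemma sol_int_rat (w : unknown -> int) : is_sol (fun t => (w t)%:~R : rat) -> is_sol w.
Proof. by move=> w_sol i; apply: map_intr_mpoly_inj; rewrite residual_map w_sol. Qed.

Lemma sol_lift_Fp : exists P0 : nat, forall p, prime p -> (P0 < p)%N ->
  forall v : unknown -> 'F_p, is_sol v ->
  exists w : unknown -> int, is_sol w /\ forall t, (w t)%:~R = v t.
Proof.
have [P0 P0_ok] := kermx_lift_Fp sol_mx; exists P0 => p p_pr P0_lt v /is_solE v_sol.
have [w [wA0 wE]] := P0_ok p p_pr P0_lt _ v_sol.
exists (fun t => w 0 (enum_rank t)); split=> [|t]; last first.
  by move/matrixP: wE => /(_ 0 (enum_rank t)); rewrite !mxE enum_rankK.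
apply/sol_int_rat/is_solE.
rewrite (_ : \row_a _ = map_mx intr w); first by rewrite -map_mxM wA0 map_mx0.
by apply/matrixP => r a; rewrite !mxE enum_valK ord1.
Qed.

Lemma sol_scale_int (v : unknown -> rat) : is_sol v ->
  exists c : int, exists w : unknown -> int,
    [/\ c != 0, is_sol w & forall t, (w t)%:~R = c%:~R * v t].
Proof.
move=> v_sol; have [c c_neq0 [w wE]] := common_denominator v.
exists c, w; split=> //; apply: sol_int_rat => i.
by rewrite (eq_residual wE) residual_scale v_sol scaler0.
Qed.

End Encoding.

(* Proportionality is detected by the 2x2 minors, which are integers. *)
Lemma nonproportional_Fp (l : nat) (a b : 'I_l -> int) : (exists j, b j != 0) ->
  ~ (exists c : rat, forall j, (a j)%:~R = c * (b j)%:~R) ->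
  exists N, forall p, prime p -> (N < p)%N ->
    ~ (exists c : 'F_p, forall j, (a j)%:~R = c * (b j)%:~R).
Proof.
move=> [j0 bj0] nprop; pose minor j := a j * b j0 - a j0 * b j.
case: (pickP (fun j => minor j != 0)) => [j minor_neq0|minor0]; last first.
  exfalso; apply: nprop; exists ((a j0)%:~R / (b j0)%:~R) => j.
  move/negbFE: (minor0 j); rewrite subr_eq0 => /eqP/(congr1 (intr : int -> rat)).
  by rewrite !intrM mulrAC => <-; rewrite mulfK // intr_eq0.
exists `|minor j|%N => p p_pr minor_lt [c abE].
have := intr_Fp_neq0 p_pr minor_neq0 minor_lt.
by rewrite /minor rmorphB !rmorphM /= !abE mulrAC subrr eqxx.
Qed.

Section Transfer.
Variables (l n : nat) (alpha : 'I_n -> 'I_l -> int) (m : 'I_n -> nat) (e : 'I_l -> nat).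
Hypothesis alpha_prim : forall (i : 'I_n) (p : nat), prime p ->
  ~ (forall j : 'I_l, (p%:Z %| alpha i j)%Z).
Hypothesis alpha_distinct : forall i i' : 'I_n, i != i' ->
  ~ (exists c : rat, forall j, red_form rat (alpha i) j = c * red_form rat (alpha i') j).
Local Notation beta K := (fun i => red_form K (alpha i)).
Definition int_family := forall k : 'I_l, unknown l n (e k) -> int.

Lemma red_form_Fp_neq0 p : prime p -> forall i, exists j, red_form 'F_p (alpha i) j != 0.
Proof.
move=> p_pr i; case: (pickP (fun j => red_form 'F_p (alpha i) j != 0)) => [j|red0].
  by exists j.
by case: (@alpha_prim i p p_pr) => j; rewrite -intr_Fp_eq0 //; apply/negbFE/red0.
Qed.

Lemma red_form_rat_neq0 i : exists j, red_form rat (alpha i) j != 0.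
Proof.
have [j red_j] := red_form_Fp_neq0 (isT : prime 2) i; exists j.
by apply: contra_neq red_j => /eqP; rewrite intr_eq0 => /eqP; rewrite /red_form => ->.
Qed.

Lemma red_form_Fp_distinct : exists N, forall p, prime p -> (N < p)%N ->
  forall i i', i != i' ->
  ~ (exists c : 'F_p, forall j, red_form 'F_p (alpha i) j = c * red_form 'F_p (alpha i') j).
Proof.
have pairN (x : 'I_n * 'I_n) : exists N, x.1 != x.2 -> forall p, prime p -> (N < p)%N ->
    ~ (exists c : 'F_p, forall j, red_form 'F_p (alpha x.1) j = c * red_form 'F_p (alpha x.2) j).
  have [x12|x12] := eqVneq x.1 x.2; first by exists 0%N; rewrite x12.
  have [j aj] := red_form_rat_neq0 x.2; rewrite /red_form intr_eq0 in aj.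
  by have [N NP] := nonproportional_Fp (ex_intro _ j aj) (alpha_distinct x12); exists N.
have [N NP] := fin_all_exists pairN.
exists (\max_x N x) => p p_pr N_lt i i' ii'; apply: (NP (i, i')) => //.
exact: leq_ltn_trans (leq_bigmax (i, i')) N_lt.
Qed.

Definition sol_family (K : fieldType) (w : int_family) : 'I_l -> derivation K l :=
  fun k => sol_deriv (fun t => (w k t)%:~R : K).

Definition int_det (w : int_family) : {mpoly int[l]} :=
  \det (\matrix_(k, j) sol_deriv (w k) j).

Definition int_def_poly : {mpoly int[l]} := \prod_(i < n) int_form alpha int i ^+ m i.

Lemma det_sol_family (K : fieldType) w :
  \det (deriv_mx (sol_family K w)) = map_mpoly intr (int_det w).
Proof.
rewrite -det_map_mx; congr (\det _); apply/matrixP => k j.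
by rewrite !mxE /= sol_deriv_map.
Qed.

Lemma int_def_poly_map (K : fieldType) : map_mpoly intr int_def_poly = def_poly (beta K) m.
Proof. by rewrite rmorph_prod; apply: eq_bigr => i _; rewrite rmorphXn /= int_form_map. Qed.

Lemma sol_family_in_D (K : fieldType) w : (forall k, is_sol alpha m (w k)) ->
  forall k, in_D (beta K) m (sol_family K w k).
Proof. by move=> w_sol k; apply/sol_in_D/sol_intr. Qed.

Lemma free_sol_family (K : fieldType) w (c : K) :
  (forall i, exists j, red_form K (alpha i) j != 0) ->
  (forall i i', i != i' ->
     ~ (exists c : K, forall j, red_form K (alpha i) j = c * red_form K (alpha i') j)) ->
  (forall k, is_sol alpha m (w k)) -> c != 0 ->
  map_mpoly intr (int_det w) = c *: def_poly (beta K) m -> free_multiarr (beta K) m e.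
Proof.
move=> alpha_neq0 alpha_dist w_sol c_neq0 detE.
have [spans indep] := saito_criterion alpha_neq0 alpha_dist (sol_family_in_D K w_sol) c_neq0
  (etrans (det_sol_family K w) detE).
exists (sol_family K w); split; first exact: sol_family_in_D.
by split=> [k j|]; first exact: sol_deriv_homog.
Qed.

Lemma free_rat_int_det : free_multiarr (beta rat) m e ->
  exists w : int_family, (forall k, is_sol alpha m (w k)) /\
    exists a b : int, [/\ a != 0, b != 0 & a *: int_det w = b *: int_def_poly].
Proof.
case=> th [thD [th_homog [th_spans _]]].
have [c c_neq0 detE] := det_spanning red_form_rat_neq0 alpha_distinct thD th_spans.
have [v vP] := fin_all_exists (fun k => in_D_sol red_form_rat_neq0 (th_homog k) (thD k)).
have [s sP] := fin_all_exists (fun k => sol_scale_int (vP k).1).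
have [w wP] := fin_all_exists sP.
exists w; split=> [k|]; first by case: (wP k).
pose r := (\prod_k (s k)%:~R) * c.
have r_neq0 : r != 0.
  by rewrite mulf_neq0 //; apply/prodf_neq0 => k _; case: (wP k); rewrite intr_eq0.
have detQ : map_mpoly intr (int_det w) = r *: def_poly (beta rat) m.
  rewrite -det_sol_family -scalerA -detE -det_deriv_mx_scale; congr (\det _).
  apply/matrixP => k j; rewrite !mxE -(vP k).2 -sol_deriv_scale.
  by apply: eq_bigr => mu _; case: (wP k) => _ _ ->.
exists (denq r), (numq r); split; rewrite ?denq_neq0 ?numq_eq0 //.
apply/eqP; rewrite -subr_eq0; apply/eqP/map_intr_mpoly_inj.
by rewrite raddfB /= !map_mpolyZ int_def_poly_map detQ scalerA [_ * r]mulrC -numqE subrr.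
Qed.

Lemma free_Fp_of_int_det w (a b : int) : (forall k, is_sol alpha m (w k)) ->
  a != 0 -> b != 0 -> a *: int_det w = b *: int_def_poly ->
  exists N, forall p, prime p -> (N < p)%N -> free_multiarr (beta 'F_p) m e.
Proof.
move=> w_sol a_neq0 b_neq0 detE; have [Nd distinct_Fp] := red_form_Fp_distinct.
exists (maxn Nd (maxn `|a| `|b|)) => p p_pr; rewrite !gtn_max => /and3P [Nd_lt a_lt b_lt].
have [ap_neq0 bp_neq0] := (intr_Fp_neq0 p_pr a_neq0 a_lt, intr_Fp_neq0 p_pr b_neq0 b_lt).
apply: (free_sol_family (red_form_Fp_neq0 p_pr) (distinct_Fp p p_pr Nd_lt) w_sol
  (c := b%:~R / a%:~R)); first by rewrite mulf_neq0 ?invr_eq0.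
apply: (scalerI ap_neq0); rewrite scalerA mulrCA mulfV // mulr1 -int_def_poly_map.
by rewrite -!map_mpolyZ detE.
Qed.

Lemma free_rat_free_Fp : free_multiarr (beta rat) m e ->
  exists N, forall p, prime p -> (N < p)%N -> free_multiarr (beta 'F_p) m e.
Proof.
case/free_rat_int_det => w [w_sol [a [b [a_neq0 b_neq0 detE]]]].
exact: free_Fp_of_int_det w_sol a_neq0 b_neq0 detE.
Qed.

Lemma free_Fp_int_det : exists N, forall p, prime p -> (N < p)%N ->
  free_multiarr (beta 'F_p) m e ->
  exists w : int_family, (forall k, is_sol alpha m (w k)) /\
    exists2 c : 'F_p, c != 0 & map_mpoly intr (int_det w) = c *: def_poly (beta 'F_p) m.
Proof.
have [P0 P0_ok] := fin_all_exists (fun k => sol_lift_Fp alpha m (e k)).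
have [Nd distinct_Fp] := red_form_Fp_distinct.
exists (maxn Nd (\max_k P0 k)) => p p_pr; rewrite gtn_max => /andP [Nd_lt P0_lt].
case=> th [thD [th_homog [th_spans _]]].
have [c c_neq0 detE] :=
  det_spanning (red_form_Fp_neq0 p_pr) (distinct_Fp p p_pr Nd_lt) thD th_spans.
have [v vP] := fin_all_exists (fun k => in_D_sol (red_form_Fp_neq0 p_pr) (th_homog k) (thD k)).
have lift k : exists w, is_sol alpha m w /\ forall t, (w t)%:~R = v k t.
  by apply: P0_ok p_pr _ _ (vP k).1; apply: leq_ltn_trans P0_lt; apply: leq_bigmax.
have [w wP] := fin_all_exists lift.
exists w; split=> [k|]; first by case: (wP k).
exists c; rewrite // -det_sol_family -detE; congr (\det _); apply/matrixP => k j.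
rewrite !mxE -(vP k).2; apply: eq_bigr => mu _; by case: (wP k) => _ ->.
Qed.

Lemma free_rat_of_Fp_det p w (c : 'F_p) : prime p -> (forall k, is_sol alpha m (w k)) ->
  c != 0 -> map_mpoly intr (int_det w) = c *: def_poly (beta 'F_p) m ->
  free_multiarr (beta rat) m e.
Proof.
move=> p_pr w_sol c_neq0 detE.
have Qp_neq0 := def_poly_neq0 m (red_form_Fp_neq0 p_pr).
have detQ_neq0 : \det (deriv_mx (sol_family rat w)) != 0.
  rewrite det_sol_family; apply: contra_neq (Qp_neq0) => /map_intr_mpoly_inj det0.
  by move: detE; rewrite det0 raddf0 => /esym/eqP; rewrite scaler_eq0 (negbTE c_neq0) => /eqP.
have family_homog (K : fieldType) : \det (deriv_mx (sol_family K w)) \is (\sum_k e k)%N.-homog.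
  by apply: det_deriv_mx_homog => k j; apply: sol_deriv_homog.
have deg_e : (\sum_k e k = \sum_i m i)%N.
  move: (family_homog 'F_p); rewrite det_sol_family detE.
  exact: (def_poly_multiple_deg (m := m) (red_form_Fp_neq0 p_pr) c_neq0 erefl).
have detQ_homog : \det (deriv_mx (sol_family rat w)) \is (\sum_i m i)%N.-homog.
  by rewrite -deg_e family_homog.
have [c' c'_neq0 detQ] := dhomog_def_poly_multiple red_form_rat_neq0 detQ_neq0 detQ_homog
  (dvdr_def_poly_det red_form_rat_neq0 alpha_distinct (sol_family_in_D rat w_sol)).
by apply: free_sol_family red_form_rat_neq0 alpha_distinct w_sol c'_neq0 _; rewrite -det_sol_family.
Qed.

Lemma free_Fp_free_rat : exists N, forall p, prime p -> (N < p)%N ->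
  free_multiarr (beta 'F_p) m e -> free_multiarr (beta rat) m e.
Proof.
have [N N_ok] := free_Fp_int_det; exists N => p p_pr N_lt /(N_ok p p_pr N_lt).
by case=> w [w_sol [c c_neq0 detE]]; apply: free_rat_of_Fp_det p_pr w_sol c_neq0 detE.
Qed.

End Transfer.

Theorem corollary4p7 (l n : nat) (alpha : 'I_n -> 'I_l -> int)
  (m : 'I_n -> nat)
  (* no prime number divides any alpha_i (i.e. divides all its coefficients) *)
  (Hprim : forall (i : 'I_n) (p : nat), prime p ->
     ~ (forall j : 'I_l, (p%:Z %| alpha i j)%Z))
  (* the hyperplanes H_1, ..., H_n of Q^l are pairwise distinct *)
  (Hdist : forall i i' : 'I_n, i != i' ->
     ~ (exists c : rat, forall j : 'I_l,
          red_form rat (alpha i) j = c * red_form rat (alpha i') j))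
  (e : 'I_l -> nat) :
  exists N : nat, forall p : nat, prime p -> (N <= p)%N ->
    (free_multiarr (fun i => red_form 'F_p (alpha i)) m e <->
     free_multiarr (fun i => red_form rat (alpha i)) m e).
Proof.
(* The bound for Q -> F_p depends on a chosen basis over Q, hence the case split. *)
have [NB FpQ] := free_Fp_free_rat m e Hprim Hdist.
case: (classic (free_multiarr (fun i => red_form rat (alpha i)) m e)) => [freeQ|nfreeQ].
  have [NA QFp] := free_rat_free_Fp Hprim Hdist freeQ.
  by exists NA.+1 => p p_pr NA_lt; split=> // _; apply: QFp.
by exists NB.+1 => p p_pr NB_lt; split=> [|/nfreeQ //]; apply: FpQ.
Qed.
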